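(* Let $S$ be a smooth cubic surface over $\mathbb{Q}$ that does not contain three pairwise disjoint lines defined over $\mathbb{Q}$. Then the number of lines on $S$ defined over $\mathbb{Q}$ is $0,1,2,3,$ or $5$.
   Context: A line on $S$ is defined over $\mathbb{Q}$ if it is cut out by linear forms with rational coefficients and is contained in $S$. A skew triple is a set of three pairwise disjoint (skew) lines on $S$. *)

From HB Require Import structures.
From mathcomp Require Import all_boot all_order all_algebra all_field.
From mathcomp Require Import mpoly.
Set Implicit Arguments. Unset Strict Implicit. Unset Printing Implicit Defensive.
Import Order.TTheory GRing.Theory Num.Theory.
Local Open Scope ring_scope.

(* A cubic form in the homogeneous coordinates x_0..x_3 of P^3 over Q. *)
Definition cubic_form (F : {mpoly rat[4]}) : Prop :=
  F != 0 /\ F \is 3.-homog.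

Definition F_alg (F : {mpoly rat[4]}) : {mpoly algC[4]} :=
  map_mpoly (fun q : rat => ratr q : algC) F.

(* The surface V(F) is smooth: no point of P^3(Qbar) at which all partial
   derivatives of F vanish (in characteristic 0 this forces F = 0 there too
   by Euler's formula, so this is the usual Jacobian criterion). *)
Definition smooth_surface (F : {mpoly rat[4]}) : Prop :=
  forall x : 'I_4 -> algC, (exists i, x i != 0) ->
    exists i : 'I_4, (mderiv i (F_alg F)).@[x] != 0.

Definition smooth_cubic_surface (F : {mpoly rat[4]}) : Prop :=
  cubic_form F /\ smooth_surface F.

(* A line of P^3 defined over Q is a 2-dimensional Q-subspace of Q^4;
   it lies on S = V(F) iff F vanishes on all of it. *)
Definition rat_line_on (F : {mpoly rat[4]}) (L : {vspace 'rV[rat]_4}) : Prop :=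
  \dim L = 2%N /\ forall v : 'rV[rat]_4, v \in L -> F.@[fun i => v ord0 i] = 0.

(* Two lines are skew (disjoint in P^3) iff the subspaces meet only in 0. *)
Definition skew (L1 L2 : {vspace 'rV[rat]_4}) : Prop := (L1 :&: L2)%VS = 0%VS.

Definition has_rat_skew_triple (F : {mpoly rat[4]}) : Prop :=
  exists L1 L2 L3, rat_line_on F L1 /\ rat_line_on F L2 /\ rat_line_on F L3 /\
    skew L1 L2 /\ skew L1 L3 /\ skew L2 L3.

From HB Require Import structures.
From mathcomp Require Import all_boot all_order all_algebra all_field.
From mathcomp Require Import mpoly.
From mathcomp Require Import ring lra zify.
From Stdlib Require Import Classical.
Set Implicit Arguments. Unset Strict Implicit. Unset Printing Implicit Defensive.
Import Order.TTheory GRing.Theory Num.Theory.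
Local Open Scope ring_scope.

(* Write F as a sum of cubic monomials and let B be its polar trilinear form,
   so B(x,x,x) = 6 F(x) and B(e_l,x,x) = 2 dF/dx_l (x).  Smoothness says that
   no nonzero q (over Qbar) has B(q,q,.) = 0, and a line on S satisfies
   B(q,q,w) = B(q,w,w) = 0 for all its points q, w.
   The geometric heart is the plane section through two meeting rational
   lines a = <u,p> and b = <v,p>: in the plane P = <p,u,v>, F restricts to
   y z (2 B(p,u,v) x + B(u,u,v) y + B(u,v,v) z), where smoothness forces the
   linear factor to be nondegenerate; its zero set is a third rational line c.
   Every other rational line meets exactly one of a, b, c: if it lay in P it
   would be one of them, and a line through P meeting two of them would pass
   through a singular point.  An abstract counting argument on the "meets"
   relation then shows that such a configuration without skew triples has
   0, 1, 2, 3 or 5 elements. *)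

Definition triple := ('I_4 * 'I_4 * 'I_4)%type.

Definition cubic_monomial (R : comNzRingType) (t : triple) : {mpoly R[4]} :=
  'X_t.1.1 * 'X_t.1.2 * 'X_t.2.
Arguments cubic_monomial {R} t.

(* The full polarization of x_a x_b x_d: the symmetric trilinear form whose
   restriction to the diagonal is 6 x_a x_b x_d. *)
Definition polar_monomial (R : comNzRingType) (t : triple) (x y z : 'rV[R]_4) : R :=
  let a := t.1.1 in let b := t.1.2 in let d := t.2 in
  x 0 a * y 0 b * z 0 d + x 0 a * y 0 d * z 0 b + x 0 b * y 0 a * z 0 d
  + x 0 b * y 0 d * z 0 a + x 0 d * y 0 a * z 0 b + x 0 d * y 0 b * z 0 a.

(* A cubic form is given by a list r of (coefficient, monomial) terms;
   [polar r] is the polar trilinear form of [cubic_of r]. *)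
Definition cubic_of (R : comNzRingType) (r : seq (R * triple)) : {mpoly R[4]} :=
  \sum_(e <- r) e.1 *: cubic_monomial e.2.

Definition polar (R : comNzRingType) (r : seq (R * triple)) (x y z : 'rV[R]_4) : R :=
  \sum_(e <- r) e.1 * polar_monomial e.2 x y z.

Section PolarForm.
Variables (R : comNzRingType) (r : seq (R * triple)).
Local Notation B := (polar r).

Ltac polar_termwise :=
  rewrite /polar ?mulr_sumr -?big_split /=; apply: eq_bigr => e _;
  rewrite /polar_monomial ?mxE; ring.

Lemma polar_sym23 x y z : B x y z = B x z y. Proof. by polar_termwise. Qed.
Lemma polar_sym13 x y z : B x y z = B z y x. Proof. by polar_termwise. Qed.

Lemma polarD3 x y z w : B x y (z + w) = B x y z + B x y w.
Proof. by polar_termwise. Qed.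

Lemma polar_cube2 s t x y :
  B (s *: x + t *: y) (s *: x + t *: y) (s *: x + t *: y) =
  s^+3 * B x x x + 3 * s^+2 * t * B x x y + 3 * s * t^+2 * B x y y + t^+3 * B y y y.
Proof. by polar_termwise. Qed.

Lemma polar_square2 s t x y w :
  B (s *: x + t *: y) (s *: x + t *: y) w =
  s^+2 * B x x w + 2 * s * t * B x y w + t^+2 * B y y w.
Proof. by polar_termwise. Qed.

Lemma polar_cube3 x y z p u v :
  B (x *: p + y *: u + z *: v) (x *: p + y *: u + z *: v) (x *: p + y *: u + z *: v) =
  x^+3 * B p p p + y^+3 * B u u u + z^+3 * B v v v
  + 3 * x^+2 * y * B p p u + 3 * x^+2 * z * B p p v + 3 * x * y^+2 * B p u u
  + 3 * x * z^+2 * B p v v + 3 * y^+2 * z * B u u v + 3 * y * z^+2 * B u v v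
  + 6 * x * y * z * B p u v.
Proof. by polar_termwise. Qed.

Lemma polar_linear4 a b c d w1 w2 w3 w4 x y :
  B x y (a *: w1 + b *: w2 + c *: w3 + d *: w4) =
  a * B x y w1 + b * B x y w2 + c * B x y w3 + d * B x y w4.
Proof. by polar_termwise. Qed.

Lemma polar_diag (x : 'rV[R]_4) :
  6 * (cubic_of r).@[fun i => x 0 i] = B x x x.
Proof.
rewrite /cubic_of (big_morph _ (mevalD _) (meval0 _)) mulr_sumr.
apply: eq_bigr => e _.
rewrite mevalZ /cubic_monomial !mevalM !mevalXU /polar_monomial /=; ring.
Qed.

Lemma polar_deriv (x : 'rV[R]_4) l :
  2 * (mderiv l (cubic_of r)).@[fun i => x 0 i] = B (delta_mx 0 l) x x.
Proof.
have dX (i : 'I_4) : (mderiv l ('X_i : {mpoly R[4]})).@[fun i => x 0 i] = (i == l)%:R.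
  rewrite mderivX mnm1E mevalZ; case: eqP => [->|_]; last by rewrite mul0r.
  have -> : (U_(l) - U_(l) = 0)%MM by apply/mnmP => j; rewrite !mnmE subnn.
  by rewrite mpolyX0 meval1 mulr1.
rewrite /cubic_of (big_morph _ (@mderivD _ _ l) (@mderiv0 _ _ l)).
rewrite (big_morph _ (mevalD _) (meval0 _)) mulr_sumr; apply: eq_bigr => e _.
rewrite mderivZ mevalZ /cubic_monomial !mderivM !(mevalD, mevalM, mevalXU, dX).
rewrite /polar_monomial /= !mxE /=; ring.
Qed.
End PolarForm.

Lemma mdeg_split (m : 'X_{1..4}) k : mdeg m = k.+1 ->
  exists i m', m = (m' + U_(i))%MM /\ mdeg m' = k.
Proof.
move=> Hm.
have [i Hi] : exists i, (0 < m i)%N.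
  apply/existsP; apply: contraT; rewrite negb_exists => /forallP H.
  suff m0 : m = 0%MM by move: Hm; rewrite m0 mdeg0.
  by apply/mnmP => j; rewrite mnmE; move: (H j); rewrite lt0n negbK => /eqP.
have Ui_le : (U_(i) <= m)%MM.
  by apply/mnm_lepP => j; rewrite mnm1E; case: eqP => [<-|].
exists i, (m - U_(i))%MM; split; first by rewrite submK.
by have := mdegD (m - U_(i))%MM U_(i); rewrite submK // mdeg1 Hm addn1 => -[].
Qed.

Lemma mdeg3_cubic_monomial (R : comNzRingType) (m : 'X_{1..4}) : mdeg m = 3%N ->
  exists t : triple, 'X_[m] = cubic_monomial (R:=R) t.
Proof.
move=> /mdeg_split [d [m1 [-> /mdeg_split [b [m2 [-> /mdeg_split [a [m3 [-> H3]]]]]]]]].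
have -> : m3 = 0%MM by apply/eqP; rewrite -mdeg_eq0 H3.
by exists (a, b, d); rewrite /cubic_monomial /= !mpolyXD mpolyX0 mul1r.
Qed.

Lemma cubic_as_terms (F : {mpoly rat[4]}) : F \is 3.-homog ->
  exists r : seq (rat * triple), F = cubic_of r.
Proof.
move=> /dhomogP Hh.
suff Hs s : {subset s <= msupp F} ->
    exists r : seq (rat * triple), \sum_(m <- s) F@_m *: 'X_[m] = cubic_of r.
  by have [r Hr] := Hs _ (fun x h => h); exists r; rewrite {1}(mpolyE F) Hr.
elim: s => [|m s IH] Hs; first by exists [::]; rewrite /cubic_of !big_nil.
have [|r Hr] := IH; first by move=> x hx; apply: Hs; rewrite inE hx orbT.
have [t Ht] := mdeg3_cubic_monomial rat (Hh m (Hs m (mem_head _ _))).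
by exists ((F@_m, t) :: r); rewrite /cubic_of !big_cons -/(cubic_of r) Hr Ht.
Qed.

Definition terms_ratr (r : seq (rat * triple)) : seq (algC * triple) :=
  map (fun e => (ratr e.1, e.2)) r.

Lemma F_alg_cubic_of r : F_alg (cubic_of r) = cubic_of (terms_ratr r).
Proof.
rewrite /F_alg /cubic_of raddf_sum big_map; apply: eq_bigr => e _.
rewrite /= (map_mpolyZ ratr) /cubic_monomial /=; congr (_ *: _).
by rewrite !(rmorphM (map_mpoly ratr)) /= !(map_mpolyX ratr).
Qed.

Lemma polar_ratr r (x y z : 'rV[rat]_4) :
  ratr (polar r x y z) =
  polar (terms_ratr r) (map_mx ratr x) (map_mx ratr y) (map_mx ratr z) :> algC.
Proof.
rewrite /polar rmorph_sum big_map; apply: eq_bigr => e _.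
by rewrite /polar_monomial !mxE !(rmorphM, rmorphD).
Qed.

Section Subspaces.
Variables (K : fieldType) (vT : vectType K).
Implicit Types (w x y z p u v : vT) (X Y Z P L : {vspace vT}).

Lemma mem_span2 w x y : w \in <<[:: x; y]>>%VS <-> exists s t, w = s *: x + t *: y.
Proof.
rewrite span_cons span_seq1; split.
  by move/memv_addP => [a /vlineP [s ->] [b /vlineP [t ->] ->]]; exists s, t.
by move=> [s [t ->]]; apply: memv_add; apply: memvZ; apply: memv_line.
Qed.

Lemma mem_span3 w x y z : w \in <<[:: x; y; z]>>%VS <->
  exists s t k, w = s *: x + t *: y + k *: z.
Proof.
rewrite span_cons; split.
  move/memv_addP => [a /vlineP [s ->] [b /mem_span2 [t [k ->]] ->]].
  by exists s, t, k; rewrite addrA.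
move=> [s [t [k ->]]]; rewrite -addrA; apply: memv_add.
  by apply: memvZ; apply: memv_line.
by apply/mem_span2; exists t, k.
Qed.

Lemma mem_span4 w x y z z' : w \in <<[:: x; y; z; z']>>%VS <->
  exists s t k k', w = s *: x + t *: y + k *: z + k' *: z'.
Proof.
rewrite span_cons; split.
  move/memv_addP => [a /vlineP [s ->] [b /mem_span3 [t [k [k' ->]]] ->]].
  by exists s, t, k, k'; rewrite !addrA.
move=> [s [t [k [k' ->]]]]; rewrite -!addrA; apply: memv_add.
  by apply: memvZ; apply: memv_line.
by apply/mem_span3; exists t, k, k'; rewrite !addrA.
Qed.

Lemma free3_coord0 p u v (x y z : K) : free [:: v; u; p] ->
  x *: p + y *: u + z *: v = 0 -> [/\ x = 0, y = 0 & z = 0].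
Proof.
move=> /(@freeP _ _ _ [tuple v; u; p]) fr e.
have := fr (fun i : 'I_3 => nth 0 [:: z; y; x] i).
rewrite !big_ord_recl big_ord0 /= addr0 addrC (addrC (y *: u)) e.
by move=> /(_ erefl) k0; split; [apply: (k0 2) | apply: (k0 1) | apply: (k0 0)].
Qed.

Lemma span_subv (s : seq vT) X : all (fun w => w \in X) s -> (<<s>> <= X)%VS.
Proof. by move=> /allP sX; apply/span_subvP. Qed.

Lemma eq_subv_dim X Y : (X <= Y)%VS -> (\dim Y <= \dim X)%N -> X = Y.
Proof. by move=> h1 h2; apply/eqP; rewrite eqEdim h1 h2. Qed.

Lemma line_basis X p : \dim X = 2%N -> p \in X -> p != 0 ->
  exists u, [/\ u \in X, u \notin <[p]>%VS & X = <<[:: u; p]>>%VS].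
Proof.
move=> dX pX p0.
have /subvPn [u uX up] : ~~ (X <= <[p]>)%VS.
  by apply/negP => /dimvS; rewrite dX dim_vline p0.
exists u; split => //.
have fr : free [:: u; p] by rewrite free_cons seq1_free p0 span_seq1 up.
symmetry; apply: eq_subv_dim; last by rewrite (eqP fr) dX.
by apply: span_subv; rewrite /= uX pX.
Qed.

Lemma coplanar_lines_meet X Y P : (X <= P)%VS -> (Y <= P)%VS ->
  \dim X = 2%N -> \dim Y = 2%N -> \dim P = 3%N -> (X :&: Y)%VS != 0%VS.
Proof.
move=> XP YP dX dY dP; apply/negP => /eqP h.
have := dimv_sum_cap X Y; rewrite h dimv0 dX dY addn0 => e.
have : (\dim (X + Y) <= \dim P)%N by apply: dimvS; rewrite subv_add XP YP.
by rewrite e dP.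
Qed.

Lemma coplanar_lines_span X Y P : (X <= P)%VS -> (Y <= P)%VS ->
  \dim X = 2%N -> \dim Y = 2%N -> \dim P = 3%N -> X != Y -> (X + Y)%VS = P.
Proof.
move=> XP YP dX dY dP nXY; apply: eq_subv_dim; first by rewrite subv_add XP YP.
rewrite dP ltnNge; apply: contra nXY => h.
have eX : X = (X + Y)%VS by apply: eq_subv_dim; [exact: addvSl | rewrite dX].
have eY : Y = (X + Y)%VS by apply: eq_subv_dim; [exact: addvSr | rewrite dY].
by rewrite eX -eY.
Qed.

Lemma dim_le1_vline Z q1 q2 : (\dim Z <= 1)%N -> q1 \in Z -> q2 \in Z -> q1 != 0 ->
  q2 \in <[q1]>%VS.
Proof.
move=> dZ h1 h2 n1.
suff -> : <[q1]>%VS = Z by [].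
by apply: eq_subv_dim; [rewrite -memvE | rewrite dim_vline n1].
Qed.

Section Dim4.
Hypothesis dim4 : \dim (fullv : {vspace vT}) = 4%N.

Lemma line_meets_plane L P : \dim L = 2%N -> \dim P = 3%N -> ~~ (L <= P)%VS ->
  [/\ (L :&: P)%VS != 0%VS, (\dim (L :&: P) <= 1)%N & (L + P)%VS = fullv].
Proof.
move=> dL dP nLP.
have e := dimv_sum_cap L P; rewrite dL dP in e.
have s4 : (\dim (L + P) <= 4)%N by rewrite -dim4; apply: dimvS; apply: subvf.
have c1 : (\dim (L :&: P) <= 1)%N.
  rewrite leqNgt; apply: contra nLP => h.
  suff <- : (L :&: P)%VS = L by exact: capvSr.
  by apply: eq_subv_dim; [exact: capvSl | rewrite dL].
split => //.
  by apply/negP => /eqP h; move: e s4; rewrite h dimv0 addn0 => ->.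
apply: eq_subv_dim; first exact: subvf.
by move: e c1; rewrite dim4; case: (\dim (L :&: P)) => [|[|]] // e _; lia.
Qed.

Lemma exists_notin_plane P : \dim P = 3%N -> exists w, w \notin P.
Proof.
move=> dP; have /subvPn [w _ h] : ~~ (fullv <= P)%VS.
  by apply/negP => /dimvS; rewrite dim4 dP.
by exists w.
Qed.
End Dim4.
End Subspaces.

(* In the plane spanned by a free triple p, u, v, the
   vectors x p + y u + z v with a x + b y + g z = 0 form a line, provided the
   linear form does not vanish on p and u, nor on p and v. *)
Section ResidualLine.
Variables (K : fieldType) (n : nat) (p u v : 'rV[K]_n) (a b g : K).
Hypothesis free_vup : free [:: v; u; p].
Local Notation pt x y z := (x *: p + y *: u + z *: v).

Definition residual_line : {vspace 'rV[K]_n} :=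
  <<[:: b *: p - a *: u; g *: p - a *: v; g *: u - b *: v]>>%VS.

Lemma pt_inj x y z x' y' z' : pt x y z = pt x' y' z' -> [/\ x = x', y = y' & z = z'].
Proof.
move=> e; have [] := @free3_coord0 _ _ p u v (x - x') (y - y') (z - z') free_vup.
  have -> : pt (x - x') (y - y') (z - z') = pt x y z - pt x' y' z'.
    by apply/rowP => i; rewrite !mxE; ring.
  by rewrite e subrr.
by move=> /subr0_eq -> /subr0_eq -> /subr0_eq ->.
Qed.

Lemma pt0 : pt 0 0 0 = 0.
Proof. by rewrite !scale0r !addr0. Qed.

Lemma scale_pt k x y z : k *: pt x y z = pt (k * x) (k * y) (k * z).
Proof. by apply/rowP => i; rewrite !mxE; ring. Qed.

Lemma plane_pt w : w \in <<[:: v; u; p]>>%VS <-> exists x y z, w = pt x y z.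
Proof.
rewrite mem_span3; split => [[s [t [k ->]]]|[x [y [z ->]]]].
  by exists k, t, s; apply/rowP => i; rewrite !mxE; ring.
by exists z, y, x; apply/rowP => i; rewrite !mxE; ring.
Qed.

Hypothesis ab0 : (a != 0) || (b != 0).
Hypothesis ag0 : (a != 0) || (g != 0).

Lemma mem_residual w : w \in residual_line <->
  exists x y z, w = pt x y z /\ a * x + b * y + g * z = 0.
Proof.
rewrite mem_span3; split.
  move=> [k1 [k2 [k3 ->]]].
  exists (k1 * b + k2 * g), (- a * k1 + g * k3), (- a * k2 - b * k3).
  by split; [apply/rowP => i; rewrite !mxE; ring | ring].
move=> [x [y [z [-> e]]]].
have [a0 | a0] := eqVneq a 0.
  move: ab0 ag0; rewrite a0 eqxx /= => b0 g0.
  have ez : z = - (b * y) / g.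
    apply: (mulIf g0); rewrite divfK //; apply/eqP; rewrite -subr_eq0 -e a0.
    by apply/eqP; ring.
  exists (x / b), 0, (y / g); apply/rowP => i; rewrite !mxE ez.
  by field; rewrite g0 b0.
have ex : x = - (b * y + g * z) / a.
  apply: (mulIf a0); rewrite divfK //; apply/eqP; rewrite -subr_eq0 -e.
  by apply/eqP; ring.
exists (- y / a), (- z / a), 0; apply/rowP => i; rewrite !mxE ex.
by field.
Qed.

Lemma residual_eq x y z : pt x y z \in residual_line -> a * x + b * y + g * z = 0.
Proof.
by move=> /mem_residual [x' [y' [z' [/pt_inj [-> -> ->] e]]]].
Qed.

Lemma residual_sub : (residual_line <= <<[:: v; u; p]>>)%VS.
Proof.
apply: span_subv; apply/allP => w; rewrite !inE.
move=> /or3P [] /eqP ->; apply/plane_pt.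
- by exists b, (- a), 0; apply/rowP => i; rewrite !mxE; ring.
- by exists g, 0, (- a); apply/rowP => i; rewrite !mxE; ring.
- by exists 0, g, (- b); apply/rowP => i; rewrite !mxE; ring.
Qed.

(* The residual line contains two independent vectors but not all of the
   plane, hence is 2-dimensional. *)
Lemma dim_residual : \dim residual_line = 2%N.
Proof.
have two_indep w1 w2 : w1 \in residual_line -> w2 \in residual_line -> w2 != 0 ->
    w1 \notin <[w2]>%VS -> (2 <= \dim residual_line)%N.
  move=> h1 h2 n2 n12.
  have fr : free [:: w1; w2] by rewrite free_cons span_seq1 n12 seq1_free n2.
  rewrite -[2%N](eqP fr); apply: dimvS; apply: span_subv; by rewrite /= h1 h2.
have in_res x y z : a * x + b * y + g * z = 0 -> pt x y z \in residual_line.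
  by move=> e; apply/mem_residual; exists x, y, z.
have pt_neq0 x y z : z != 0 -> pt x y z != 0.
  by apply: contra => /eqP e; move: e; rewrite -pt0 => /pt_inj [_ _ ->].
have lo : (2 <= \dim residual_line)%N.
  have [a0 | a0] := eqVneq a 0.
    move: ag0; rewrite a0 eqxx /= => g0.
    apply: (two_indep (pt 0 g (- b)) (pt 1 0 0)).
    - by apply: in_res; ring.
    - by apply: in_res; rewrite a0; ring.
    - by apply/eqP; rewrite -pt0 => /pt_inj [/eqP]; rewrite oner_eq0.
    apply/vlineP => -[k]; rewrite scale_pt => /pt_inj [_ e _].
    by move: g0; rewrite e mulr0 eqxx.
  apply: (two_indep (pt b (- a) 0) (pt g 0 (- a))).
  - by apply: in_res; ring.
  - by apply: in_res; ring.
  - by apply: pt_neq0; rewrite oppr_eq0.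
  apply/vlineP => -[k]; rewrite scale_pt => /pt_inj [_ e _].
  by move: a0; rewrite -oppr_eq0 e mulr0 eqxx.
apply/eqP; rewrite eqn_leq lo andbT leqNgt; apply/negP => hi.
have eP : residual_line = <<[:: v; u; p]>>%VS.
  apply: eq_subv_dim; first exact: residual_sub.
  by rewrite (eqP free_vup).
have := residual_eq (x:=1) (y:=0) (z:=0); have := residual_eq (x:=0) (y:=1) (z:=0).
rewrite eP !(mul1r, mulr1, mulr0, add0r, addr0).
have mP x y z : pt x y z \in <<[:: v; u; p]>>%VS by apply/plane_pt; exists x, y, z.
by move=> /(_ (mP _ _ _)) b0 /(_ (mP _ _ _)) a0; move: ab0; rewrite a0 b0 eqxx.
Qed.
End ResidualLine.

(* Over a field of characteristic 0, a line (2-dimensional subspace) covered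
   by finitely many lines is one of them: among size Ws + 1 distinct points of
   the line two lie on the same covering line, which must then be the line. *)
Lemma line_in_cover (K : numFieldType) n (l : {vspace 'rV[K]_n})
    (Ws : seq {vspace 'rV[K]_n}) :
  \dim l = 2%N -> (forall W, W \in Ws -> \dim W = 2%N) ->
  (forall w, w \in l -> has (fun W : {vspace 'rV[K]_n} => w \in W) Ws) -> l \in Ws.
Proof.
move=> dl dWs cover.
have e10 : vpick l != 0 by rewrite vpick0; apply/eqP => l0; move: dl; rewrite l0 dimv0.
have [e2 [e2l _ el]] := line_basis dl (memv_pick l) e10.
pose w (k : nat) := vpick l + k%:R *: e2.
have wl k : w k \in l by apply: memvD; [exact: memv_pick | exact: memvZ].
have two_points W i j : \dim W = 2%N -> w i \in W -> w j \in W -> i != j -> l = W.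
  move=> dW hi hj nij; apply: eq_subv_dim; last by rewrite dW dl.
  have ij : (j%:R - i%:R : K) != 0 by rewrite subr_eq0 eqr_nat eq_sym.
  have e2W : e2 \in W.
    have -> : e2 = (j%:R - i%:R)^-1 *: (w j - w i).
      by apply/rowP => t; rewrite /w !mxE; field.
    by apply: memvZ; apply: memvB.
  have e1W : vpick l \in W.
    have -> : vpick l = w i - i%:R *: e2 by apply/rowP => t; rewrite /w !mxE; ring.
    by apply: memvB => //; apply: memvZ.
  by rewrite el; apply: span_subv; rewrite /= e2W e1W.
have [// | lWs] := boolP (l \in Ws).
pose hit (k : 'I_(size Ws).+1) := find (fun W : {vspace 'rV[K]_n} => w k \in W) Ws.
have hit_lt k : (hit k < size Ws)%N by rewrite -has_find cover.
have hit_inj : injective (fun k => Ordinal (hit_lt k)).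
  move=> i j /(congr1 val) /= hij; apply/val_inj/eqP; apply: contraT => nij.
  have WWs : nth 0%VS Ws (hit i) \in Ws by rewrite mem_nth.
  have := two_points _ i j (dWs _ WWs) (nth_find 0%VS (cover _ (wl i))).
  rewrite hij => /(_ (nth_find 0%VS (cover _ (wl j))) nij) eW.
  by move: lWs; rewrite eW -hij WWs.
by have := leq_card _ hit_inj; rewrite !card_ord ltnn.
Qed.

Section LineConfigurations.
Variables (T : eqType) (line : T -> Prop) (meets : T -> T -> bool).
Hypothesis meetsC : forall x y, meets x y = meets y x.
Hypothesis no_skew_triple : forall x y z, line x -> line y -> line z ->
  ~~ meets x y -> ~~ meets x z -> ~~ meets y z -> False.

Definition exactly_one (x y z : bool) :=
  [|| x && ~~ y && ~~ z, ~~ x && y && ~~ z | ~~ x && ~~ y && z].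

Definition triangle a b c :=
  [/\ [/\ line a, line b & line c], [/\ a != b, a != c & b != c],
      [/\ meets a b, meets a c & meets b c]
    & forall l, line l -> l != a -> l != b -> l != c ->
        exactly_one (meets l a) (meets l b) (meets l c)].

Hypothesis triangle_completion : forall a b, line a -> line b -> a != b ->
  meets a b -> exists c, triangle a b c.

Lemma triangle_perm12 a b c : triangle a b c -> triangle b a c.
Proof.
case=> [[La Lb Lc] [ab ac bc] [mab mac mbc] H].
split; [by [] | by rewrite eq_sym | by rewrite meetsC |].
by move=> l Ll lb la lc; move: (H l Ll la lb lc); rewrite /exactly_one;
  case: (meets l a); case: (meets l b); case: (meets l c).
Qed.

Lemma triangle_perm23 a b c : triangle a b c -> triangle a c b.
Proof.
case=> [[La Lb Lc] [ab ac bc] [mab mac mbc] H].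
split; [by [] | by rewrite [c == b]eq_sym | by rewrite [meets c b]meetsC |].
by move=> l Ll la lc lb; move: (H l Ll la lb lc); rewrite /exactly_one;
  case: (meets l a); case: (meets l b); case: (meets l c).
Qed.

Definition enumerates (s : seq T) := uniq s /\ forall L, L \in s <-> line L.

(* A line d outside a triangle x y z, meeting x, yields exactly five lines:
   x, y, z, d and the third side d' of the triangle through x and d. *)
Lemma five_lines x y z d : triangle x y z -> line d ->
  d != x -> d != y -> d != z -> meets d x ->
  exists s, enumerates s /\ size s = 5%N.
Proof.
move=> Txyz Ld dx dy dz mdx.
have [[Lx Ly Lz] [xy xz yz] [mxy mxz myz] Hxyz] := Txyz.
have [ndy ndz] : ~~ meets d y /\ ~~ meets d z.
  by move: (Hxyz d Ld dx dy dz); rewrite mdx /exactly_one; case: (meets d y); case: (meets d z).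
have [xd mxd] : x != d /\ meets x d by rewrite eq_sym meetsC.
have [d' Txdd'] := triangle_completion Lx Ld xd mxd.
have [[_ _ Ld'] [_ xd' dd'] [_ mxd' mdd'] Hxdd'] := Txdd'.
have [[yx yd] [zx zd]] : (y != x /\ y != d) /\ (z != x /\ z != d).
  by rewrite ![_ == x]eq_sym ![_ == d]eq_sym.
have yd' : y != d' by apply: contraNneq ndy => ->.
have zd' : z != d' by apply: contraNneq ndz => ->.
have [nyd nyd'] : ~~ meets y d /\ ~~ meets y d'.
  move: (Hxdd' y Ly yx yd yd').
  by rewrite meetsC mxy /exactly_one; case: (meets y d); case: (meets y d').
have [nzd nzd'] : ~~ meets z d /\ ~~ meets z d'.
  move: (Hxdd' z Lz zx zd zd').
  by rewrite meetsC mxz /exactly_one; case: (meets z d); case: (meets z d').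
exists [:: x; y; z; d; d']; split => //; split.
  rewrite /= !inE !negb_or xy xz xd' yz yd' zd' dd' (eq_sym x d) dx.
  by rewrite (eq_sym y d) dy (eq_sym z d) dz.
move=> L; split.
  by rewrite !inE => /orP [/eqP ->|/orP [/eqP ->|/orP [/eqP ->|/orP [/eqP ->|/eqP ->]]]].
move=> LL; apply/negPn/negP; rewrite !inE !negb_or => /and5P [Lx' Ly' Lz' Ld1 Ld2].
have skew1 := no_skew_triple Ly Ld LL nyd; have skew2 := no_skew_triple Lz Ld' LL nzd'.
have skew3 := no_skew_triple Lz Ld LL nzd; have skew4 := no_skew_triple Ly Ld' LL nyd'.
move: (Hxyz L LL Lx' Ly' Lz') (Hxdd' L LL Lx' Ld1 Ld2) skew1 skew2 skew3 skew4.
rewrite !(meetsC _ L) /exactly_one.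
case: (meets L x); case: (meets L y); case: (meets L z); case: (meets L d);
  case: (meets L d') => //= _ _ s1 s2 s3 s4;
  by [exfalso; apply: s1 | exfalso; apply: s2 | exfalso; apply: s3 | exfalso; apply: s4].
Qed.

Lemma pairwise_skew_lines : (forall a b, line a -> line b -> a != b -> ~~ meets a b) ->
  exists s, enumerates s /\ (size s <= 2)%N.
Proof.
move=> skew.
have [[a La]|no_line] := classic (exists a, line a); last first.
  by exists [::]; split => //; split => // L; split => // LL; case: no_line; exists L.
have [[b [Lb ba]]|one_line] := classic (exists b, line b /\ b != a); last first.
  exists [:: a]; split => //; split => // L; rewrite inE; split; first by move/eqP ->.
  by move=> LL; apply/negPn/negP => La'; apply: one_line; exists L.
exists [:: a; b]; split => //; split; first by rewrite /= inE eq_sym ba.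
move=> L; rewrite !inE; split; first by move/orP => [] /eqP ->.
move=> LL; apply/negPn/negP; rewrite negb_or => /andP [La' Lb'].
by apply: (no_skew_triple La Lb LL); apply: skew => //; rewrite eq_sym.
Qed.

Lemma line_count : exists s, enumerates s /\ size s \in [:: 0; 1; 2; 3; 5]%N.
Proof.
have [[a [b [La Lb ab mab]]]|no_meet] :=
  classic (exists a b, [/\ line a, line b, a != b & meets a b]); last first.
  have [|s [es s2]] := pairwise_skew_lines.
    by move=> a b La Lb ab; apply/negP => mab; apply: no_meet; exists a, b.
  by exists s; split => //; move: s2; case: (size s) => [|[|[|]]].
have [c Tabc] := triangle_completion La Lb ab mab.
have [[_ _ Lc] [_ ac bc] _ H] := Tabc.
have [[d [Ld da db dc]]|no_fourth] :=
  classic (exists d, [/\ line d, d != a, d != b & d != c]); last first.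
  exists [:: a; b; c]; split => //; split.
    by rewrite /= !inE !negb_or ab ac bc.
  move=> L; split; first by rewrite !inE => /or3P [] /eqP ->.
  move=> LL; apply/negPn/negP; rewrite !inE !negb_or => /and3P [La' Lb' Lc'].
  by apply: no_fourth; exists L.
suff [s [es s5]] : exists s, enumerates s /\ size s = 5%N by exists s; rewrite s5.
move: (H d Ld da db dc); rewrite /exactly_one.
case/or3P => [/andP [/andP [mda _] _] | /andP [/andP [_ mdb] _] | /andP [_ mdc]].
- exact: (five_lines Tabc Ld da db dc mda).
- exact: (five_lines (triangle_perm12 Tabc) Ld db da dc mdb).
- exact: (five_lines (triangle_perm12 (triangle_perm23 Tabc)) Ld dc da db mdc).
Qed.
End LineConfigurations.

Lemma dim_rV4 : \dim (fullv : {vspace 'rV[rat]_4}) = 4%N.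
Proof. by rewrite dimvf /dim /= mul1n. Qed.

Definition meets (L M : {vspace 'rV[rat]_4}) : bool := (L :&: M)%VS != 0%VS.

Lemma meetsC L M : meets L M = meets M L.
Proof. by rewrite /meets capvC. Qed.

Lemma meetsP (L M : {vspace 'rV[rat]_4}) q : q \in L -> q \in M -> q != 0 -> meets L M.
Proof.
move=> qL qM q0; apply: contra q0 => /eqP LM0.
have : q \in (L :&: M)%VS by apply/memv_capP.
by rewrite LM0 memv0.
Qed.

Lemma meets_pick (L M : {vspace 'rV[rat]_4}) : meets L M ->
  [/\ vpick (L :&: M) \in L, vpick (L :&: M) \in M & vpick (L :&: M) != 0].
Proof.
move=> h; have /memv_capP [h1 h2] := memv_pick (L :&: M)%VS.
by split => //; rewrite vpick0.
Qed.

Lemma quad_root (a b c : algC) : a != 0 -> exists x, a * x ^+ 2 + b * x + c = 0.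
Proof.
move=> a0; set s := sqrtC (b ^+ 2 - 4 * a * c).
have hs : s ^+ 2 = b ^+ 2 - 4 * a * c by rewrite /s sqrtCK.
exists ((- b + s) / (2 * a)).
have -> : a * ((- b + s) / (2 * a)) ^+ 2 + b * ((- b + s) / (2 * a)) + c =
   (s ^+ 2 - (b ^+ 2 - 4 * a * c)) / (4 * a) by field.
by rewrite hs subrr mul0r.
Qed.

Lemma row_nonzero_entry (R : zmodType) n (q : 'rV[R]_n) : q != 0 -> exists i, q 0 i != 0.
Proof.
move=> q0; apply/existsP; apply: contraR q0; rewrite negb_exists => /forallP qi0.
by apply/eqP/rowP => j; rewrite mxE; apply/eqP; move: (qi0 j); rewrite negbK.
Qed.

Local Notation algc w := (map_mx (fun k : rat => ratr k : algC) w).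

(* Rational vectors independent over Q stay independent over Qbar: an
   algebraic multiple of p can only equal -u if the multiplier is rational. *)
Lemma algc_independent (p u : 'rV[rat]_4) (x : algC) :
  p != 0 -> u \notin <[p]>%VS -> x *: algc p + algc u != 0.
Proof.
move=> p0 up; apply/eqP => h.
have [i pi0] := row_nonzero_entry p0.
have ex : x = ratr (- (u 0 i / p 0 i)).
  have hpi : (ratr (p 0 i) : algC) != 0 by rewrite fmorph_eq0.
  apply: (mulIf hpi); rewrite rmorphN fmorph_div mulNr divfK //.
  have := congr1 (fun M : 'rV[algC]_4 => M 0 i) h; rewrite !mxE => /eqP.
  by rewrite addr_eq0 => /eqP.
move/negP: up; apply; apply/vlineP; exists (u 0 i / p 0 i); apply/rowP => j.
have := congr1 (fun M : 'rV[algC]_4 => M 0 j) h; rewrite !mxE ex -rmorphM -rmorphD => /eqP.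
by rewrite fmorph_eq0 addr_eq0 => /eqP e; rewrite -[u 0 j]opprK -e mulNr opprK.
Qed.

Lemma line_quadric_zero (p u : 'rV[rat]_4) (A M C : rat) :
  p != 0 -> u \notin <[p]>%VS ->
  exists x y : algC, x *: algc p + y *: algc u != 0 /\
    ratr A * x ^+ 2 + 2 * ratr M * x * y + ratr C * y ^+ 2 = 0.
Proof.
move=> p0 up; have [A0 | A0] := eqVneq A 0.
  exists 1, 0; rewrite scale1r scale0r addr0 map_mx_eq0 p0 A0 rmorph0.
  by split => //; ring.
have [x hx] : exists x : algC, ratr A * x ^+ 2 + 2 * ratr M * x + ratr C = 0.
  by apply: quad_root; rewrite fmorph_eq0.
by exists x, 1; rewrite scale1r algc_independent //; split => //; rewrite -hx; ring.
Qed.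

Section LinesOnCubic.
Variables (F : {mpoly rat[4]}) (r : seq (rat * triple)).
Hypothesis F_terms : F = cubic_of r.
Hypothesis F_smooth : smooth_surface F.
Local Notation B := (polar r).
Local Notation on_S := (rat_line_on F).

Lemma on_surface_polar (v : 'rV[rat]_4) : F.@[fun i => v ord0 i] = 0 <-> B v v v = 0.
Proof.
rewrite -polar_diag -F_terms; split => [->|/eqP]; first by rewrite mulr0.
by rewrite mulf_eq0 => /orP [] // /eqP.
Qed.

(* Smoothness: no nonzero point of Qbar^4 is killed by every partial
   derivative, i.e. by every B(e_l, q, q); over Q this says that no nonzero q
   has B(q, q, .) identically zero. *)
Lemma smooth_polar_algC (q : 'rV[algC]_4) :
  q != 0 -> ~ (forall l, polar (terms_ratr r) (delta_mx 0 l) q q = 0).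
Proof.
move=> q0 H.
have [i qi0] := row_nonzero_entry q0.
have [l dl] := F_smooth (ex_intro _ i qi0).
have := polar_deriv (terms_ratr r) q l; rewrite -F_alg_cubic_of -F_terms H.
by move/eqP; rewrite mulf_eq0 (negbTE dl) orbF pnatr_eq0.
Qed.

Lemma smooth_polar (q : 'rV[rat]_4) : q != 0 -> ~ (forall w, B q q w = 0).
Proof.
move=> q0 H; apply: (@smooth_polar_algC (algc q)); first by rewrite map_mx_eq0.
by move=> l; rewrite polar_sym13 -(map_delta_mx ratr) -polar_ratr H rmorph0.
Qed.

(* Along a line on S, the cubic restricted to the line vanishes identically,
   so all mixed polar values of points of the line vanish. *)
Lemma line_tangent L q w : on_S L -> q \in L -> w \in L -> B q q w = 0 /\ B q w w = 0.
Proof.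
move=> [_ HL] qL wL.
have H s t : B (s *: q + t *: w) (s *: q + t *: w) (s *: q + t *: w) = 0.
  by apply/on_surface_polar/HL; apply: memvD; apply: memvZ.
have := H 1 0; have := H 0 1; have := H 1 1; have := H 1 (-1).
rewrite !polar_cube2 !expr1n !expr0n /= => h1 h2 h3 h4.
have qqq : B q q q = 0 by lra.
have www : B w w w = 0 by lra.
by move: h1 h2; rewrite qqq www; split; lra.
Qed.

(* If B(q, q, v) vanishes for all q on a line a of S, for some v outside a,
   then S is singular at some point of a (over Qbar): B(q, q, .) then vanishes
   on a and v, and the remaining condition is one quadratic equation on a. *)
Lemma polar_degenerate_line a p u v r0 : on_S a -> p \in a -> u \in a ->
  p != 0 -> u \notin <[p]>%VS -> <<[:: r0; v; u; p]>>%VS = fullv ->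
  B p p v = 0 -> B p u v = 0 -> B u u v = 0 -> False.
Proof.
move=> La pa ua p0 up span4 ppv puv uuv.
have [ppp _] := line_tangent La pa pa.
have [ppu puu] := line_tangent La pa ua.
have [uuu _] := line_tangent La ua ua.
have [x [y [q0 hq]]] := line_quadric_zero (B p p r0) (B p u r0) (B u u r0) p0 up.
apply: (smooth_polar_algC q0) => l; rewrite polar_sym13.
have /mem_span4 [k1 [k2 [k3 [k4 el]]]] : delta_mx 0 l \in <<[:: r0; v; u; p]>>%VS.
  by rewrite span4 memvf.
have -> : delta_mx 0 l =
    ratr k1 *: algc r0 + ratr k2 *: algc v + ratr k3 *: algc u + ratr k4 *: algc p.
  apply/rowP => j; have := congr1 (fun M : 'rV[rat]_4 => M 0 j) el; rewrite !mxE => ej.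
  by rewrite -!rmorphM -!rmorphD -ej rmorph_nat.
rewrite polar_linear4 !polar_square2 -!polar_ratr.
rewrite [B p u p]polar_sym23 [B u u p]polar_sym13.
rewrite ppv puv uuv ppp ppu puu uuu !rmorph0.
transitivity (ratr k1 * (ratr (B p p r0) * x ^+ 2 + 2 * ratr (B p u r0) * x * y
                         + ratr (B u u r0) * y ^+ 2)); first by ring.
by rewrite hq mulr0.
Qed.

(* A line l of S outside a plane P cannot meet two distinct lines X, Y of P:
   it would meet both at the single point l /\ P, and B(q, q, .) would vanish
   on l + X + Y = Q^4, contradicting smoothness. *)
Lemma meets_one_coplanar l X Y P : on_S l -> on_S X -> on_S Y ->
  (X <= P)%VS -> (Y <= P)%VS -> \dim P = 3%N -> X != Y -> ~~ (l <= P)%VS ->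
  meets l X -> meets l Y -> False.
Proof.
move=> Ll LX LY XP YP dP nXY nlP mX mY.
have [_ dim_lP lP] := line_meets_plane dim_rV4 Ll.1 dP nlP.
have [q1l q1X q10] := meets_pick mX.
have [q2l q2Y q20] := meets_pick mY.
have q1Y : vpick (l :&: X) \in Y.
  have /vlineP [k ->] : vpick (l :&: X) \in <[vpick (l :&: Y)]>%VS.
    apply: (dim_le1_vline dim_lP) q20; apply/memv_capP; split => //.
    - exact: (subvP YP).
    - exact: (subvP XP).
  exact: memvZ.
apply: (smooth_polar q10) => w.
have : w \in (l + (X + Y))%VS by rewrite (coplanar_lines_span XP YP LX.1 LY.1 dP nXY) lP memvf.
move=> /memv_addP [w1 w1l [_ /memv_addP [w2 w2X [w3 w3Y ->]] ->]].
by rewrite !polarD3 (line_tangent Ll q1l w1l).1 (line_tangent LX q1X w2X).1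
  (line_tangent LY q1Y w3Y).1 !addr0.
Qed.

(* In coordinates x p + y u + z v of the plane P they span, F restricts to
   y z (2 B(p,u,v) x + B(u,u,v) y + B(u,v,v) z), so the section is a + b + c
   with c the residual line of this linear form. *)
Section PlaneSection.
Variables (a b : {vspace 'rV[rat]_4}) (p u v : 'rV[rat]_4).
Hypotheses (La : on_S a) (Lb : on_S b).
Hypotheses (ea : a = <<[:: u; p]>>%VS) (eb : b = <<[:: v; p]>>%VS).
Hypothesis free_vup : free [:: v; u; p].
Local Notation pt x y z := (x *: p + y *: u + z *: v).
Local Notation P := <<[:: v; u; p]>>%VS.

Let pa : p \in a. Proof. by rewrite ea memv_span // !inE eqxx orbT. Qed.
Let ua : u \in a. Proof. by rewrite ea memv_span // !inE eqxx. Qed.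
Let pb : p \in b. Proof. by rewrite eb memv_span // !inE eqxx orbT. Qed.
Let vb : v \in b. Proof. by rewrite eb memv_span // !inE eqxx. Qed.
Let aP : (a <= P)%VS.
Proof. by rewrite ea; apply: span_subv; rewrite /= !memv_span ?inE ?eqxx ?orbT. Qed.
Let bP : (b <= P)%VS.
Proof. by rewrite eb; apply: span_subv; rewrite /= !memv_span ?inE ?eqxx ?orbT. Qed.
Let dimP : \dim P = 3%N. Proof. exact: (eqP free_vup). Qed.
Let v_notin_a : v \notin a. Proof. by move: free_vup; rewrite free_cons ea => /andP []. Qed.
Let free_up : free [:: u; p]. Proof. by move: free_vup; rewrite free_cons => /andP []. Qed.
Let p0 : p != 0. Proof. by move: free_up; rewrite free_cons seq1_free => /andP []. Qed.
Let up : u \notin <[p]>%VS.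
Proof. by move: free_up; rewrite free_cons span_seq1 => /andP []. Qed.
Let vp : v \notin <[p]>%VS.
Proof.
apply: contra v_notin_a => /vlineP [k ->].
by rewrite ea; apply/mem_span2; exists 0, k; rewrite scale0r add0r.
Qed.

Lemma plane_cubic x y z :
  B (pt x y z) (pt x y z) (pt x y z) =
  3 * y * z * (2 * B p u v * x + B u u v * y + B u v v * z).
Proof.
have [ppp _] := line_tangent La pa pa; have [ppu puu] := line_tangent La pa ua.
have [uuu _] := line_tangent La ua ua; have [ppv pvv] := line_tangent Lb pb vb.
have [vvv _] := line_tangent Lb vb vb.
by rewrite polar_cube3 ppp ppu puu uuu ppv pvv vvv; ring.
Qed.

(* Smoothness along a and along b rules out a degenerate linear form. *)
Lemma plane_form_nondegenerate :
  ((2 * B p u v != 0) || (B u u v != 0)) && ((2 * B p u v != 0) || (B u v v != 0)).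
Proof.
have [r0 r0P] := exists_notin_plane dim_rV4 dimP.
have span4 : <<[:: r0; v; u; p]>>%VS = fullv.
  apply: eq_subv_dim; first exact: subvf.
  have fr : free [:: r0; v; u; p] by rewrite free_cons r0P free_vup.
  by rewrite dim_rV4 (eqP fr).
have span4' : <<[:: r0; u; v; p]>>%VS = fullv.
  by rewrite -span4; apply: eq_span => w; rewrite !inE; congr (_ || _); rewrite orbCA.
have [ppu _] := line_tangent La pa ua; have [ppv _] := line_tangent Lb pb vb.
rewrite mulf_eq0 pnatr_eq0 /= -!negb_and; apply/andP; split; apply/negP => /andP [/eqP puv /eqP h].
- exact: (polar_degenerate_line La pa ua p0 up span4 ppv puv h).
- apply: (polar_degenerate_line Lb pb vb p0 vp span4' ppu); first by rewrite polar_sym23.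
  by rewrite polar_sym13.
Qed.

Let nondeg_u : (2 * B p u v != 0) || (B u u v != 0).
Proof. by case/andP: plane_form_nondegenerate. Qed.
Let nondeg_v : (2 * B p u v != 0) || (B u v v != 0).
Proof. by case/andP: plane_form_nondegenerate. Qed.

Definition third_line := residual_line p u v (2 * B p u v) (B u u v) (B u v v).
Local Notation c := third_line.

Lemma third_line_on_S : on_S c.
Proof.
split; first exact: dim_residual free_vup nondeg_u nondeg_v.
move=> w /(mem_residual p u v nondeg_u nondeg_v) [x [y [z [-> e]]]].
by apply/on_surface_polar; rewrite plane_cubic e mulr0.
Qed.

Lemma plane_section_cover w : w \in P -> B w w w = 0 ->
  has (fun L : {vspace 'rV[rat]_4} => w \in L) [:: a; b; c].
Proof.
move=> /plane_pt [x [y [z ->]]]; rewrite plane_cubic => /eqP.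
rewrite /= !mulf_eq0 pnatr_eq0 /= -!orbA => /or3P [/eqP y0 | /eqP z0 | /eqP e].
- apply/orP; right; apply/orP; left; rewrite eb; apply/mem_span2; exists z, x.
  by rewrite y0 scale0r addr0 addrC.
- by apply/orP; left; rewrite ea; apply/mem_span2; exists y, x; rewrite z0 scale0r addr0 addrC.
- do 2 (apply/orP; right); apply/orP; left.
  by apply/(mem_residual p u v nondeg_u nondeg_v); exists x, y, z.
Qed.

Lemma plane_section_triangle : triangle on_S meets a b c.
Proof.
have Lc := third_line_on_S.
have cP : (c <= P)%VS by exact: residual_sub.
have in_c x y z : pt x y z \in c -> 2 * B p u v * x + B u u v * y + B u v v * z = 0.
  exact: residual_eq.
have coef_p : p \in c -> 2 * B p u v = 0.
  move=> pc; have := in_c 1 0 0; rewrite scale1r !scale0r !addr0 => /(_ pc).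
  by rewrite mulr1 !mulr0 !addr0.
have coef_u : u \in c -> B u u v = 0.
  move=> uc; have := in_c 0 1 0; rewrite scale1r !scale0r add0r addr0 => /(_ uc).
  by rewrite mulr1 !mulr0 add0r addr0.
have coef_v : v \in c -> B u v v = 0.
  move=> vc; have := in_c 0 0 1; rewrite scale1r !scale0r !add0r => /(_ vc).
  by rewrite mulr1 !mulr0 !add0r.
have ab : a != b by apply: contraNneq v_notin_a => ->.
have ac : a != c.
  apply/negP => /eqP ac; have [pc uc] : p \in c /\ u \in c by rewrite -ac.
  by move: nondeg_u; rewrite coef_p // coef_u // eqxx.
have bc : b != c.
  apply/negP => /eqP bc; have [pc vc] : p \in c /\ v \in c by rewrite -bc.
  by move: nondeg_v; rewrite coef_p // coef_v // eqxx.
split => //.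
  split; [exact: meetsP pa pb p0 | exact: coplanar_lines_meet aP cP La.1 Lc.1 dimP |
          exact: coplanar_lines_meet bP cP Lb.1 Lc.1 dimP].
move=> l Ll la lb lc.
have [lP | lP] := boolP (l <= P)%VS.
  have dim_abc W : W \in [:: a; b; c] -> \dim W = 2%N.
    by rewrite !inE => /or3P [] /eqP ->; [exact: La.1 | exact: Lb.1 | exact: Lc.1].
  suff : l \in [:: a; b; c] by rewrite !inE (negbTE la) (negbTE lb) (negbTE lc).
  apply: (line_in_cover Ll.1 dim_abc) => w wl.
  exact: plane_section_cover (subvP lP w wl) ((on_surface_polar w).1 (Ll.2 w wl)).
have [lP0 _ _] := line_meets_plane dim_rV4 Ll.1 dimP lP.
have [ql qP q0] := meets_pick lP0.
have one := plane_section_cover qP ((on_surface_polar _).1 (Ll.2 _ ql)).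
have not_two := meets_one_coplanar Ll _ _ _ _ dimP _ lP.
move: one (not_two _ _ La Lb aP bP ab) (not_two _ _ La Lc aP cP ac)
  (not_two _ _ Lb Lc bP cP bc); rewrite /= orbF /exactly_one.
move=> /or3P hit; have : [|| meets l a, meets l b | meets l c].
  by case: hit => /(meetsP ql)/(_ q0) ->; rewrite ?orbT.
by case: (meets l a); case: (meets l b); case: (meets l c) => //= _ h1 h2 h3;
  exfalso; [apply: h1 | apply: h1 | apply: h2 | apply: h3].
Qed.
End PlaneSection.

Lemma meeting_lines_triangle a b : on_S a -> on_S b -> a != b -> meets a b ->
  exists c, triangle on_S meets a b c.
Proof.
move=> La Lb ab mab.
have [pa pb p0] := meets_pick mab.
set p := vpick (a :&: b)%VS in pa pb p0.
have [u [ua up ea]] := line_basis La.1 pa p0.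
have /subvPn [v vb va] : ~~ (b <= a)%VS.
  apply: contra ab => ba; rewrite eq_sym; apply/eqP.
  by apply: eq_subv_dim ba _; rewrite La.1 Lb.1.
have free_vup : free [:: v; u; p].
  by rewrite free_cons -ea va free_cons span_seq1 up seq1_free p0.
have eb : b = <<[:: v; p]>>%VS.
  have vp : v \notin <[p]>%VS by apply: contra va => /vlineP [k ->]; exact: memvZ.
  have fr : free [:: v; p] by rewrite free_cons span_seq1 vp seq1_free p0.
  symmetry; apply: eq_subv_dim; first by apply: span_subv; rewrite /= vb pb.
  by rewrite Lb.1 (eqP fr).
by eexists; exact: plane_section_triangle La Lb ea eb free_vup.
Qed.
End LinesOnCubic.

Theorem lemma4p13 (F : {mpoly rat[4]}) :
  smooth_cubic_surface F -> ~ has_rat_skew_triple F ->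
  exists s : seq {vspace 'rV[rat]_4},
    [/\ uniq s, (forall L, L \in s <-> rat_line_on F L)
      & size s \in [:: 0; 1; 2; 3; 5]%N].
Proof.
move=> [[_ F_cubic] F_smooth] no_triple.
have [r F_terms] := cubic_as_terms F_cubic.
have no_skew x y z : rat_line_on F x -> rat_line_on F y -> rat_line_on F z ->
    ~~ meets x y -> ~~ meets x z -> ~~ meets y z -> False.
  move=> Lx Ly Lz /negPn/eqP xy /negPn/eqP xz /negPn/eqP yz.
  by apply: no_triple; exists x, y, z.
have [s [[s_uniq s_lines] s_size]] :=
  line_count meetsC no_skew (meeting_lines_triangle F_terms F_smooth).
by exists s.
Qed.
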